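(* Let $\kappa$ be an uncountable cardinal with $\kappa=\kappa^{<\kappa}$. Then there is a continuous injective function $f:{}^\kappa\kappa\to{}^\kappa\kappa$ whose range is not a $\kappa$-Borel subset of ${}^\kappa\kappa$.
   Context: ${}^\kappa\kappa$ is the set of functions $\kappa\to\kappa$, with the topology whose basic open sets are $N_s=\{x\in{}^\kappa\kappa : s\subseteq x\}$ for $s$ a function from some ordinal $\alpha<\kappa$ to $\kappa$. A subset of ${}^\kappa\kappa$ is $\kappa$-Borel if it belongs to the smallest algebra of subsets of ${}^\kappa\kappa$ that contains all open sets and is closed under unions of $\kappa$ many sets (and complements). *)

(* The cardinal kappa is represented by a type K carrying a
   strict well-order lt whose order type is an initial ordinal (a cardinal):
   no proper initial segment has cardinality |K|. *)
From Stdlib Require Import Classical.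

Set Implicit Arguments.

Section GeneralizedBaire.
Variables (K : Type) (lt : K -> K -> Prop).

Definition strict_well_order : Prop :=
  (forall a, ~ lt a a) /\
  (forall a b c, lt a b -> lt b c -> lt a c) /\
  (forall a b, lt a b \/ a = b \/ lt b a) /\
  well_founded lt.

Definition seg (a : K) : Type := { b : K | lt b a }.

Definition is_cardinal : Prop :=
  strict_well_order /\
  forall a : K, ~ exists f : K -> seg a, forall x y, f x = f y -> x = y.

Definition uncountable : Prop :=
  ~ exists f : K -> nat, forall x y, f x = f y -> x = y.

(* kappa^{<kappa} <= kappa: the set of all functions alpha -> kappa,
   alpha < kappa, injects into kappa (the reverse inequality is trivial). *)
Definition kappa_lt_kappa_eq_kappa : Prop :=
  exists f : { a : K & seg a -> K } -> K, forall x y, f x = f y -> x = y.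

Definition baire := K -> K.

Definition N (a : K) (s : seg a -> K) : baire -> Prop :=
  fun x => forall (b : K) (h : lt b a), x b = s (exist _ b h).

Definition kopen (U : baire -> Prop) : Prop :=
  forall x, U x -> exists (a : K) (s : seg a -> K),
    N s x /\ (forall y, N s y -> U y).

Inductive kBorel : (baire -> Prop) -> Prop :=
| kBorel_open : forall U, kopen U -> kBorel U
| kBorel_compl : forall A, kBorel A -> kBorel (fun x => ~ A x)
| kBorel_union : forall F : K -> (baire -> Prop),
    (forall i, kBorel (F i)) -> kBorel (fun x => exists i, F i x).

Definition kcontinuous (f : baire -> baire) : Prop :=
  forall U, kopen U -> kopen (fun x => U (f x)).

End GeneralizedBaire.

(* Borel sets are coded by well-founded trees of height omega and branching kappa whose nodes are
   complements, unions or basic open sets; a code is evaluated at a point x by marking each node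
   with whether its set contains x, recording at a union node the least child that does.  Using
   kappa^{<kappa} = kappa, trees and evaluations are themselves points of the Baire space, and the
   set D of points c whose own tree, evaluated at c, is false is not kappa-Borel: were D coded by
   T, the point coding T would lie in D iff it does not.
   The same hypothesis gives cf(kappa) > omega, so well-foundedness of a tree is a closed condition,
   and so is the set P of points pairing some c in D with its evaluation.  The map emb copying the
   c-part on P, and otherwise marking the first level at which failure to lie in P is visible and
   encoding initial segments above it, is a continuous injection.  D is the preimage of its range
   under the continuous map c |-> lift o c, hence that range is not kappa-Borel. *)

From Stdlib Require Import Classical ClassicalEpsilon FunctionalExtensionality Eqdep List PeanoNat Lia.
Import ListNotations.

Lemma wf_least (A : Type) (R : A -> A -> Prop) (P : A -> Prop) :
  well_founded R -> (exists x, P x) -> exists m, P m /\ forall y, P y -> ~ R y m.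
Proof.
  intros wfR [x Px]. apply NNPP; intro no_least.
  revert Px. induction (wfR x) as [x _ IH]. intro Px.
  apply no_least. exists x. split; [exact Px|]. intros y Py Ryx. exact (IH y Ryx Py).
Qed.

Lemma uncountable_not_onto (A : Type) (f : nat -> A) :
  uncountable A -> ~ forall y, exists n, y = f n.
Proof.
  intros unc onto. apply unc.
  exists (fun y => epsilon (inhabits 0) (fun n => y = f n)). intros x y exy.
  rewrite (epsilon_spec (inhabits 0) _ (onto x)), (epsilon_spec (inhabits 0) _ (onto y)), exy.
  reflexivity.
Qed.

Lemma uncountable_inhabited (A : Type) : uncountable A -> inhabited A.
Proof.
  intro unc. apply NNPP; intro empty. apply unc.
  exists (fun _ => 0). intro x. exfalso. exact (empty (inhabits x)).
Qed.

Lemma dependent_choice_path (A : Type) (R : A -> A -> Prop) (P : A -> Prop) (a : A) :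
  P a -> (forall u, P u -> exists v, R u v /\ P v) -> exists g : nat -> A, forall n, R (g n) (g (S n)).
Proof.
  intros Pa step.
  pose (next := fun s : {u | P u} =>
    let c := constructive_indefinite_description _ (step _ (proj2_sig s)) in
    exist P (proj1_sig c) (proj2 (proj2_sig c))).
  pose (path := fix path n := match n with 0 => exist P a Pa | S n => next (path n) end).
  assert (next_R : forall s, R (proj1_sig s) (proj1_sig (next s))).
  { intro s. exact (proj1 (proj2_sig (constructive_indefinite_description _ (step _ (proj2_sig s))))). }
  exists (fun n => proj1_sig (path n)). intro n. apply next_R.
Qed.

Local Notation emi := excluded_middle_informative.

Section GeneralizedBaireSpace.
Variables (K : Type) (lt : K -> K -> Prop).
Hypothesis irr_lt : forall a, ~ lt a a.
Hypothesis trans_lt : forall a b c, lt a b -> lt b c -> lt a c.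
Hypothesis total_lt : forall a b, lt a b \/ a = b \/ lt b a.
Hypothesis wf_lt : well_founded lt.
Hypothesis K_inhabited : inhabited K.

Definition lek a b := lt a b \/ a = b.

Lemma not_lt_lek a b : ~ lt a b -> lek b a.
Proof. intro h. destruct (total_lt a b) as [?|[->|?]]; [contradiction|right|left]; auto. Qed.

Lemma lt_lek_trans a b c : lt a b -> lek b c -> lt a c.
Proof. intros hab [hbc|<-]; eauto. Qed.

Lemma lek_lt_trans a b c : lek a b -> lt b c -> lt a c.
Proof. intros [hab| ->] hbc; eauto. Qed.

Definition least : K := epsilon K_inhabited (fun m => forall y, ~ lt y m).

Lemma not_lt_least y : ~ lt y least.
Proof.
  revert y. apply (epsilon_spec K_inhabited (fun m => forall y, ~ lt y m)).
  destruct K_inhabited as [k].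
  destruct (wf_least _ lt (fun _ => True) wf_lt (ex_intro _ k I)) as [m [_ hm]].
  exists m. intro y. exact (hm y I).
Qed.

Definition next (x : K) : K := epsilon K_inhabited (fun y => lt x y /\ forall z, lt x z -> ~ lt z y).

Lemma next_spec x : (exists y, lt x y) -> lt x (next x) /\ forall z, lt x z -> ~ lt z (next x).
Proof. intro hx. unfold next. apply epsilon_spec, (wf_least _ _ _ wf_lt hx). Qed.

(* Once [K] is known to have no greatest element, [ord n] is the finite ordinal [n]. *)
Fixpoint ord (n : nat) : K := match n with 0 => least | S n => next (ord n) end.

Lemma ord_below n : (forall k, k < n -> lt (ord k) (ord (S k))) ->
  forall b, lt b (ord n) -> exists m, m < n /\ b = ord m.
Proof.
  induction n as [|n IH]; intros mono b hb.
  - exfalso. exact (not_lt_least b hb).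
  - destruct (total_lt b (ord n)) as [h|[->|h]].
    + destruct (IH (fun k hk => mono k ltac:(lia)) b h) as [m [hm ->]]. exists m. split; [lia|auto].
    + exists n. auto.
    + exfalso. apply (proj2 (next_spec (ord n) (ex_intro _ b h)) b h hb).
Qed.

Lemma ord_lt_of_mono : (forall k, lt (ord k) (ord (S k))) -> forall k m, k < m -> lt (ord k) (ord m).
Proof. intros mono k m hkm. induction hkm; eauto. Qed.

Lemma ord_inj_of_mono : (forall k, lt (ord k) (ord (S k))) -> forall k m, ord k = ord m -> k = m.
Proof.
  intros mono k m e. destruct (Nat.lt_trichotomy k m) as [h|[h|h]]; auto; exfalso;
  apply (irr_lt (ord k)); [rewrite e at 2|rewrite e at 1]; apply ord_lt_of_mono; auto.
Qed.

Definition ord_index (y : K) : nat := epsilon (inhabits 0) (fun n => y = ord n).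

Lemma ord_index_spec y : (exists n, y = ord n) -> y = ord (ord_index y).
Proof. apply (epsilon_spec (inhabits 0) (fun n => y = ord n)). Qed.

Lemma ord_onto_of_stall n : (forall k, k < n -> lt (ord k) (ord (S k))) -> ~ lt (ord n) (ord (S n)) ->
  forall y, exists m, y = ord m.
Proof.
  intros mono stall y. destruct (total_lt y (ord n)) as [h|[->|h]].
  - destruct (ord_below n mono y h) as [m [_ ->]]. eauto.
  - eauto.
  - exfalso. exact (stall (proj1 (next_spec (ord n) (ex_intro _ y h)))).
Qed.

Hypothesis K_uncountable : uncountable K.
Hypothesis K_cardinal : forall a : K, ~ exists f : K -> seg lt a, forall x y, f x = f y -> x = y.

(* If [a] were greatest, [a |-> ord 0], [ord n |-> ord (S n)] would inject [K] into [seg a]. *)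
Lemma hilbert_hotel a : (forall k, lt (ord k) (ord (S k))) -> ~ forall b, ~ lt a b.
Proof.
  intros mono amax.
  pose (shift := fun y => if emi (y = a) then ord 0
                  else if emi (exists n, y = ord n) then ord (S (ord_index y)) else y).
  assert (shift_cases : forall y, (y = a /\ shift y = ord 0) \/
            (exists n, y = ord n /\ shift y = ord (S n)) \/
            (y <> a /\ (forall n, y <> ord n) /\ shift y = y)).
  { intro y. unfold shift.
    destruct (emi (y = a)) as [?|ya]; [left; auto|right].
    destruct (emi (exists n, y = ord n)) as [h|h].
    - left. exists (ord_index y). split; auto. apply ord_index_spec, h.
    - right. split; [|split]; eauto. }
  assert (shift_below : forall y, lt (shift y) a).
  { intro y. assert (ord_ne_a : forall n, ord n <> a).
    { intros n e. apply (amax (ord (S n))). rewrite <- e. apply mono. }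
    destruct (total_lt (shift y) a) as [?|[e|h]]; [auto| |exfalso; exact (amax _ h)].
    exfalso. destruct (shift_cases y) as [[_ e']|[[n [_ e']]|[ya [_ e']]]]; rewrite e' in e.
    - exact (ord_ne_a 0 e).
    - exact (ord_ne_a (S n) e).
    - exact (ya e). }
  apply (K_cardinal a). exists (fun y => exist _ (shift y) (shift_below y)).
  intros x y e. apply (f_equal (@proj1_sig _ _)) in e. cbn [proj1_sig] in e.
  pose proof (ord_inj_of_mono mono) as ord_inj.
  destruct (shift_cases x) as [[-> ex]|[[n [-> ex]]|[_ [nx ex]]]];
  destruct (shift_cases y) as [[-> ey]|[[m [-> ey]]|[_ [ny ey]]]];
  rewrite ?ex, ?ey in e; try (apply ord_inj in e; congruence); try exact e;
  exfalso; first [exact (nx _ e) | exact (ny _ (eq_sym e))].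
Qed.

Lemma exists_gt a : exists b, lt a b.
Proof.
  apply NNPP; intro no_gt.
  destruct (classic (forall k, lt (ord k) (ord (S k)))) as [mono|stalls].
  - apply (hilbert_hotel a mono). eauto.
  - apply not_all_ex_not in stalls.
    destruct (wf_least _ _ _ Nat.lt_wf_0 stalls) as [n [stall below_n]].
    apply (uncountable_not_onto K ord K_uncountable).
    apply (ord_onto_of_stall n); [|exact stall].
    intros k hk. apply NNPP. intro h. exact (below_n k h hk).
Qed.

Lemma ord_mono k : lt (ord k) (ord (S k)).
Proof. exact (proj1 (next_spec (ord k) (exists_gt (ord k)))). Qed.

Lemma ord_lt k m : k < m -> lt (ord k) (ord m).
Proof. exact (ord_lt_of_mono ord_mono k m). Qed.

Lemma ord_inj k m : ord k = ord m -> k = m.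
Proof. exact (ord_inj_of_mono ord_mono k m). Qed.

Lemma ord_index_ord n : ord_index (ord n) = n.
Proof. symmetry. apply ord_inj, ord_index_spec. eauto. Qed.

Lemma ord_bounded : exists b, forall n, lt (ord n) b.
Proof.
  apply NNPP; intro unbounded.
  apply (uncountable_not_onto K ord K_uncountable). intro y.
  apply NNPP; intro not_ord. apply unbounded. exists y. intro n.
  destruct (total_lt (ord n) y) as [h|[h|h]]; [exact h| |]; exfalso; apply not_ord.
  - eauto.
  - destruct (ord_below n (fun k _ => ord_mono k) y h) as [m [_ ->]]. eauto.
Qed.

Variable enc : { a : K & seg lt a -> K } -> K.
Hypothesis enc_inj : forall x y, enc x = enc y -> x = y.

Lemma enc_dom_inj a s a' s' : enc (existT _ a s) = enc (existT _ a' s') -> a = a'.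
Proof. intro e. exact (f_equal (@projT1 _ _) (enc_inj _ _ e)). Qed.

Lemma enc_fun_inj a s s' : enc (existT _ a s) = enc (existT _ a s') -> s = s'.
Proof. intro e. exact (inj_pairT2 _ _ _ _ _ (enc_inj _ _ e)). Qed.

Definition omega_bound : K := epsilon K_inhabited (fun b => forall n, lt (ord n) b).

Lemma ord_lt_omega_bound n : lt (ord n) omega_bound.
Proof. revert n. exact (epsilon_spec _ (fun b => forall n, lt (ord n) b) ord_bounded). Qed.

Definition enc_seq (f : nat -> K) : K :=
  enc (existT _ omega_bound (fun s : seg lt omega_bound => f (ord_index (proj1_sig s)))).

Lemma enc_seq_inj f g : enc_seq f = enc_seq g -> f = g.
Proof.
  intro e. apply enc_fun_inj in e. extensionality n.
  pose proof (f_equal (fun h => h (exist _ (ord n) (ord_lt_omega_bound n))) e) as en.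
  simpl in en. rewrite ord_index_ord in en. exact en.
Qed.

Lemma not_onto_from_lek (a : K) (h : K -> K) : exists v, forall xi, lek xi a -> h xi <> v.
Proof.
  apply NNPP; intro onto.
  assert (pre : forall v, exists xi, lek xi a /\ h xi = v).
  { intro v. apply NNPP; intro nv. apply onto. exists v. intros xi hxi e. apply nv. eauto. }
  pose (sec := fun v => epsilon K_inhabited (fun xi => lek xi a /\ h xi = v)).
  assert (sec_spec : forall v, lek (sec v) a /\ h (sec v) = v) by (intro v; apply epsilon_spec, pre).
  pose proof (proj1 (next_spec a (exists_gt a))) as a_lt_next.
  apply (K_cardinal (next a)).
  exists (fun v => exist _ (sec v) (lek_lt_trans _ _ _ (proj1 (sec_spec v)) a_lt_next)).
  intros v w e. apply (f_equal (@proj1_sig _ _)) in e. simpl in e.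
  rewrite <- (proj2 (sec_spec v)), <- (proj2 (sec_spec w)), e. reflexivity.
Qed.

(* A diagonal argument through [enc_seq]: an unbounded [s] would make [K] a countable union of
   sets of size [< K], one of which contains [enc_seq g] for the [g] avoiding all of them. *)
Lemma nat_seq_bounded (s : nat -> K) : exists b, forall n, lt (s n) b.
Proof.
  apply NNPP; intro unbounded.
  assert (cofinal : forall b, exists n, lek b (s n)).
  { intro b. apply NNPP; intro hb. apply unbounded. exists b. intro n.
    apply NNPP; intro hn. apply hb. exists n. apply not_lt_lek, hn. }
  pose (decode := fun xi => epsilon (inhabits (fun _ : nat => xi)) (fun f => enc_seq f = xi)).
  pose (g := fun n => epsilon K_inhabited (fun v => forall xi, lek xi (s n) -> decode xi n <> v)).
  assert (g_avoids : forall n xi, lek xi (s n) -> decode xi n <> g n).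
  { intro n. apply (epsilon_spec K_inhabited (fun v => forall xi, lek xi (s n) -> decode xi n <> v)).
    apply not_onto_from_lek. }
  assert (decode_g : decode (enc_seq g) = g).
  { apply enc_seq_inj. apply (epsilon_spec _ (fun f => enc_seq f = enc_seq g)). eauto. }
  destruct (cofinal (enc_seq g)) as [n hn].
  apply (g_avoids n _ hn). rewrite decode_g. reflexivity.
Qed.

Lemma list_bounded (S : list K) : exists b, forall x, In x S -> lt x b.
Proof.
  destruct (nat_seq_bounded (fun n => nth n S least)) as [b hb].
  exists b. intros x hx. destruct (In_nth S x least hx) as [n [_ <-]]. apply hb.
Qed.

Definition pair (x y : K) : K :=
  enc (existT _ (ord 2) (fun s : seg lt (ord 2) => if emi (proj1_sig s = ord 0) then x else y)).

Definition star : K := enc (existT _ (ord 0) (fun _ : seg lt (ord 0) => least)).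

Lemma pair_inj x y x' y' : pair x y = pair x' y' -> x = x' /\ y = y'.
Proof.
  intro e. apply enc_fun_inj in e.
  pose proof (f_equal (fun h => h (exist _ (ord 0) (ord_lt 0 2 ltac:(lia)))) e) as e0.
  pose proof (f_equal (fun h => h (exist _ (ord 1) (ord_lt 1 2 ltac:(lia)))) e) as e1.
  cbn [proj1_sig] in e0, e1.
  destruct (emi (ord 0 = ord 0)) as [_|]; [|congruence].
  destruct (emi (ord 1 = ord 0)) as [h|_]; [discriminate (ord_inj 1 0 h)|].
  auto.
Qed.

Lemma pair_ne_star x y : pair x y <> star.
Proof. intro e. apply enc_dom_inj, ord_inj in e. discriminate. Qed.

Definition lift (x : K) : K := pair x x.

Lemma lift_inj x y : lift x = lift y -> x = y.
Proof. intro e. apply pair_inj in e. tauto. Qed.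

Lemma lift_ne_star x : lift x <> star.
Proof. apply pair_ne_star. Qed.

Definition yes : K := lift (ord 0).
Definition tag_compl : K := pair (ord 0) (ord 1).
Definition tag_union : K := pair (ord 1) (ord 0).
Definition tag_empty : K := lift (ord 1).

Lemma ord0_ne_ord1 : ord 0 <> ord 1.
Proof. intro e. discriminate (ord_inj 0 1 e). Qed.

Lemma tag_compl_ne_union : tag_compl <> tag_union.
Proof. intro e. apply pair_inj in e. exact (ord0_ne_ord1 (proj1 e)). Qed.

Lemma tag_empty_ne_compl : tag_empty <> tag_compl.
Proof. intro e. apply pair_inj in e. exact (ord0_ne_ord1 (eq_sym (proj1 e))). Qed.

Lemma tag_empty_ne_union : tag_empty <> tag_union.
Proof. intro e. apply pair_inj in e. exact (ord0_ne_ord1 (eq_sym (proj2 e))). Qed.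

(* Excluding the domain [ord 2] keeps pairs, in particular the tags, from coding basic open sets. *)
Definition basic_mem (v : K) (x : baire K) : Prop :=
  exists a (s : seg lt a -> K), enc (existT _ a s) = v /\ a <> ord 2 /\ N s x.

Lemma not_basic_mem_pair p q x : ~ basic_mem (pair p q) x.
Proof. intros [a [s [e [a2 _]]]]. exact (a2 (enc_dom_inj _ _ _ _ e)). Qed.

Fixpoint code_list (l : list K) : K :=
  match l with [] => star | x :: l => pair x (code_list l) end.

Lemma code_list_inj l l' : code_list l = code_list l' -> l = l'.
Proof.
  revert l'. induction l as [|x l IH]; intros [|x' l'] e; simpl in e; auto.
  - exfalso. exact (pair_ne_star _ _ (eq_sym e)).
  - exfalso. exact (pair_ne_star _ _ e).
  - apply pair_inj in e. destruct e as [-> e]. f_equal. auto.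
Qed.

(* A code is a tree [T : list K -> K]: a node labelled [tag_compl] has the single child
   [u ++ [ord 0]], a node labelled [tag_union] has all children [u ++ [i]], and any other label
   [v] makes [u] a leaf standing for the basic open set coded by [v] (empty if there is none). *)
Definition child (T : list K -> K) (u v : list K) : Prop :=
  exists i, v = u ++ [i] /\ (T u = tag_union \/ (T u = tag_compl /\ i = ord 0)).

Definition wf_tree (T : list K -> K) : Prop :=
  ~ exists g : nat -> list K, forall n, child T (g n) (g (S n)).

(* [E u] is [star] iff the set coded at [u] misses [x]; otherwise, at a union node, [E u] names
   the least child containing [x], so that a violation is witnessed by finitely many values of [E]. *)
Definition compl_rule (E : list K -> K) (u : list K) : Prop :=
  (E (u ++ [ord 0]) = star /\ E u = yes) \/ (E (u ++ [ord 0]) <> star /\ E u = star).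

Definition union_rule (E : list K -> K) (u : list K) : Prop :=
  (E u = star /\ forall i, E (u ++ [i]) = star) \/
  (exists i, E u = lift i /\ E (u ++ [i]) <> star /\ forall j, lt j i -> E (u ++ [j]) = star).

Definition leaf_rule (v : K) (x : baire K) (E : list K -> K) (u : list K) : Prop :=
  (basic_mem v x /\ E u = yes) \/ (~ basic_mem v x /\ E u = star).

Definition eval_rule (T : list K -> K) (x : baire K) (E : list K -> K) (u : list K) : Prop :=
  (T u = tag_compl /\ compl_rule E u) \/ (T u = tag_union /\ union_rule E u) \/
  (T u <> tag_compl /\ T u <> tag_union /\ leaf_rule (T u) x E u).

Definition is_eval T x E : Prop := forall u, eval_rule T x E u.

Definition codes (T : list K -> K) (B : baire K -> Prop) : Prop :=
  wf_tree T /\ forall x, exists E, is_eval T x E /\ (B x <-> E [] <> star).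

Lemma eval_disagree_child T x E1 E2 u : is_eval T x E1 -> is_eval T x E2 -> E1 u <> E2 u ->
  exists v, child T u v /\ E1 v <> E2 v.
Proof.
  intros V1 V2 ne. apply NNPP; intro agree_children.
  assert (agree : forall v, child T u v -> E1 v = E2 v).
  { intros v hv. apply NNPP; intro h. apply agree_children; eauto. }
  assert (agree_union : T u = tag_union -> forall j, E1 (u ++ [j]) = E2 (u ++ [j])).
  { intros hU j. apply agree. exists j. auto. }
  apply ne. clear agree_children ne. pose proof tag_compl_ne_union.
  destruct (V1 u) as [[c1 [[a1 b1]|[a1 b1]]]|
                      [[c1 [[a1 b1]|[i1 [a1 [b1 d1]]]]]|[c1 [c1' [[a1 b1]|[a1 b1]]]]]];
  destruct (V2 u) as [[c2 [[a2 b2]|[a2 b2]]]|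
                      [[c2 [[a2 b2]|[i2 [a2 [b2 d2]]]]]|[c2 [c2' [[a2 b2]|[a2 b2]]]]]];
  try congruence; try tauto.
  - rewrite agree in a1; [congruence|]. exists (ord 0). auto.
  - rewrite agree in a1; [congruence|]. exists (ord 0). auto.
  - exfalso. apply b2. rewrite <- agree_union; auto.
  - exfalso. apply b1. rewrite agree_union; auto.
  - rewrite a1, a2. f_equal.
    destruct (total_lt i1 i2) as [h|[h|h]]; auto; exfalso.
    + apply b1. rewrite agree_union; auto.
    + apply b2. rewrite <- agree_union; auto.
Qed.

Lemma eval_unique T x E1 E2 : wf_tree T -> is_eval T x E1 -> is_eval T x E2 -> E1 = E2.
Proof.
  intros wfT V1 V2. extensionality u. apply NNPP; intro ne. apply wfT.
  apply (dependent_choice_path _ (child T) (fun u => E1 u <> E2 u) u ne).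
  intros v hv. exact (eval_disagree_child T x E1 E2 v V1 V2 hv).
Qed.

Definition graft {A : Type} (r : A) (T : K -> list K -> A) (l : list K) : A :=
  match l with [] => r | i :: u => T i u end.

Lemma graft_wf r T : (forall i, wf_tree (T i)) -> wf_tree (graft r T).
Proof.
  intros wfT [g hg].
  destruct (hg 0) as [j [g1 _]].
  destruct (g 1) as [|i w0] eqn:e1; [destruct (g 0); discriminate|].
  assert (in_i : forall n, exists w, g (S n) = i :: w).
  { induction n as [|n [w hw]]; eauto.
    destruct (hg (S n)) as [j' [-> _]]. rewrite hw. exists (w ++ [j']). reflexivity. }
  apply (wfT i). exists (fun n => tl (g (S n))). intro n.
  destruct (in_i n) as [w hw], (in_i (S n)) as [w' hw'], (hg (S n)) as [k [hk hk']].
  rewrite hw, hw' in *. simpl. injection hk as ->. exists k. auto.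
Qed.

Lemma graft_is_eval r T er ET x : (forall i, is_eval (T i) x (ET i)) ->
  eval_rule (graft r T) x (graft er ET) [] -> is_eval (graft r T) x (graft er ET).
Proof. intros hT hr [|i w]; auto. exact (hT i w). Qed.

Definition empty_tree : list K -> K := fun _ => tag_empty.

Lemma empty_tree_wf : wf_tree empty_tree.
Proof.
  intros [g hg]. destruct (hg 0) as [j [_ [h|[h _]]]].
  - exact (tag_empty_ne_union h).
  - exact (tag_empty_ne_compl h).
Qed.

Lemma empty_tree_eval x : is_eval empty_tree x (fun _ => star).
Proof.
  intro u. right; right. split; [apply tag_empty_ne_compl|]. split; [apply tag_empty_ne_union|].
  right. split; auto. apply not_basic_mem_pair.
Qed.

Lemma codes_ext T B B' : codes T B -> (forall x, B x <-> B' x) -> codes T B'.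
Proof.
  intros [wfT hT] hB. split; [exact wfT|]. intro x.
  destruct (hT x) as [E [hE hx]]. exists E. rewrite <- hB. auto.
Qed.

Lemma codes_leaf v : v <> tag_compl -> v <> tag_union ->
  codes (graft v (fun _ => empty_tree)) (basic_mem v).
Proof.
  intros vC vU. split; [apply graft_wf; intros; apply empty_tree_wf|]. intro x.
  pose (er := if emi (basic_mem v x) then yes else star).
  exists (graft er (fun _ _ => star)). split.
  - apply graft_is_eval; [intros; apply empty_tree_eval|].
    right; right. unfold leaf_rule, er. simpl. destruct (emi (basic_mem v x)); tauto.
  - simpl. unfold er. destruct (emi (basic_mem v x)); [|tauto].
    split; [intros _; apply lift_ne_star|auto].
Qed.

Lemma codes_compl T A : codes T A ->
  codes (graft tag_compl (fun i => if emi (i = ord 0) then T else empty_tree)) (fun x => ~ A x).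
Proof.
  intros [wfT hT]. split.
  - apply graft_wf. intro i. destruct (emi (i = ord 0)); auto using empty_tree_wf.
  - intro x. destruct (hT x) as [E [hE hA]].
    pose (er := if emi (E [] = star) then yes else star).
    exists (graft er (fun i => if emi (i = ord 0) then E else (fun _ => star))). split.
    + apply graft_is_eval.
      * intro i. destruct (emi (i = ord 0)); auto using empty_tree_eval.
      * left. split; [reflexivity|]. unfold compl_rule. cbn [graft app].
        destruct (emi (ord 0 = ord 0)) as [_|]; [|congruence].
        unfold er. destruct (emi (E [] = star)); auto.
    + simpl. unfold er. destruct (emi (E [] = star)) as [h|h].
      * split; [intros _; apply lift_ne_star|]. intros _ hx. exact (proj1 hA hx h).
      * split; [intro nA; exfalso; apply nA, hA, h | congruence].
Qed.

Lemma union_eval_root (Es : K -> list K -> K) :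
  exists er, ((er = star /\ forall i, Es i [] = star) \/
              (exists i, er = lift i /\ Es i [] <> star /\ forall j, lt j i -> Es j [] = star))
    /\ ((exists i, Es i [] <> star) <-> er <> star).
Proof.
  destruct (classic (exists i, Es i [] <> star)) as [h|h].
  - destruct (wf_least _ _ _ wf_lt h) as [m [hm hmin]]. exists (lift m). split.
    + right. exists m. repeat split; auto. intros j hj. apply NNPP; intro hn. exact (hmin j hn hj).
    + split; intros _; [apply lift_ne_star|exact h].
  - exists star. split; [|tauto].
    left. split; auto. intro i. apply NNPP; intro hn. apply h. eauto.
Qed.

Lemma codes_union (F : K -> baire K -> Prop) (Ts : K -> list K -> K) :
  (forall i, codes (Ts i) (F i)) -> codes (graft tag_union Ts) (fun x => exists i, F i x).
Proof.
  intros hF. split; [apply graft_wf; intro i; apply hF|]. intro x.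
  assert (hE : forall i, exists E, is_eval (Ts i) x E /\ (F i x <-> E [] <> star))
    by (intro i; apply hF).
  destruct (choice _ hE) as [Es hEs].
  destruct (union_eval_root Es) as [er [hr her]].
  exists (graft er Es). split.
  - apply graft_is_eval; [intro i; apply hEs|]. right; left. auto.
  - rewrite <- her. split; intros [i hi]; exists i; apply (hEs i); auto.
Qed.

Definition restr (y : baire K) (a : K) : seg lt a -> K := fun s => y (proj1_sig s).

Definition open_label (U : baire K -> Prop) (i : K) : K :=
  if emi (exists a (s : seg lt a -> K), enc (existT _ a s) = i /\ a <> ord 2 /\ forall y, N s y -> U y)
  then i else tag_empty.

Lemma open_label_not_tag U i : open_label U i <> tag_compl /\ open_label U i <> tag_union.
Proof.
  unfold open_label. destruct (emi _) as [[a [s [<- [a2 _]]]]|_].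
  - split; intro e; exact (a2 (enc_dom_inj _ _ _ _ e)).
  - split; [apply tag_empty_ne_compl|apply tag_empty_ne_union].
Qed.

Lemma open_label_sub U i x : basic_mem (open_label U i) x -> U x.
Proof.
  unfold open_label. destruct (emi _) as [[a [s [<- [_ sU]]]]|_].
  - intros [a' [s' [e [_ hx]]]].
    destruct (enc_dom_inj _ _ _ _ e). apply enc_fun_inj in e. subst s'. auto.
  - intro h. destruct (not_basic_mem_pair _ _ _ h).
Qed.

Lemma open_label_cover U x : kopen lt U -> U x -> exists i, basic_mem (open_label U i) x.
Proof.
  intros hU hx. destruct (hU x hx) as [a [s [xs sU]]].
  destruct (list_bounded [a; ord 2]) as [a' ha'].
  assert (a_lt : lt a a') by (apply ha'; simpl; auto).
  assert (a'_ne : a' <> ord 2) by (intros ->; apply (irr_lt (ord 2)), ha'; simpl; auto).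
  exists (enc (existT _ a' (restr x a'))).
  assert (restr_sub : forall y, N (restr x a') y -> U y).
  { intros y hy. apply sU. intros b hb. rewrite <- (xs b hb). exact (hy b (trans_lt _ _ _ hb a_lt)). }
  unfold open_label. destruct (emi _) as [_|no]; [|exfalso; apply no; eauto].
  exists a', (restr x a'). repeat split; auto.
Qed.

Lemma codes_open U : kopen lt U ->
  codes (graft tag_union (fun i => graft (open_label U i) (fun _ => empty_tree))) U.
Proof.
  intro hU. eapply codes_ext.
  - apply codes_union. intro i. destruct (open_label_not_tag U i). apply codes_leaf; auto.
  - intro x. split.
    + intros [i hi]. exact (open_label_sub U i x hi).
    + exact (open_label_cover U x hU).
Qed.

Lemma kBorel_codes B : kBorel lt B -> exists T, codes T B.
Proof.
  induction 1 as [U hU|A _ [T hT]|F _ IH].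
  - eexists. apply codes_open, hU.
  - eexists. apply codes_compl, hT.
  - destruct (choice _ IH) as [Ts hTs]. eexists. apply codes_union, hTs.
Qed.

Definition tree_of (c : baire K) : list K -> K := fun l => c (code_list l).

Definition baire_of (T : list K -> K) (d : K) (p : K) : K :=
  if emi (exists l, code_list l = p) then T (epsilon (inhabits []) (fun l => code_list l = p)) else d.

Lemma baire_of_code_list T d l : baire_of T d (code_list l) = T l.
Proof.
  unfold baire_of. destruct (emi _) as [h|h]; [|exfalso; eauto].
  f_equal. apply code_list_inj.
  apply (epsilon_spec (inhabits []) (fun l' => code_list l' = code_list l)). eauto.
Qed.

Lemma baire_of_off T d p : ~ (exists l, code_list l = p) -> baire_of T d p = d.
Proof. unfold baire_of. destruct (emi _); tauto. Qed.

Lemma tree_of_baire_of T d : tree_of (baire_of T d) = T.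
Proof. extensionality l. apply baire_of_code_list. Qed.

Definition diag (c : baire K) : Prop :=
  wf_tree (tree_of c) /\ exists E, is_eval (tree_of c) c E /\ E [] = star.

Lemma diag_not_kBorel Q : (forall c, Q c <-> diag c) -> ~ kBorel lt Q.
Proof.
  intros hQ hB. destruct (kBorel_codes Q hB) as [T [wfT hT]].
  pose (d := baire_of T tag_empty).
  destruct (hT d) as [E [hE hQd]].
  assert (d_tree : tree_of d = T) by apply tree_of_baire_of.
  destruct (classic (Q d)) as [h|h].
  - pose proof h as [_ [E' [hE' root]]]%hQ. rewrite d_tree in hE'.
    apply hQd in h. rewrite (eval_unique T d E E' wfT hE hE') in h. contradiction.
  - apply h, hQ. unfold diag. rewrite d_tree. split; [exact wfT|]. exists E. split; [exact hE|].
    apply NNPP; intro ne. exact (h (proj2 hQd ne)).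
Qed.

Definition unpair (v : K) : K * K :=
  epsilon (inhabits (star, star)) (fun p => pair (fst p) (snd p) = v).

Lemma unpair_pair a b : unpair (pair a b) = (a, b).
Proof.
  unfold unpair.
  pose proof (epsilon_spec (inhabits (star, star)) (fun p : K * K => pair (fst p) (snd p) = pair a b)
    (ex_intro _ (a, b) eq_refl)) as h.
  destruct (epsilon _ _) as [p q]. apply pair_inj in h. simpl in h. destruct h as [-> ->]. reflexivity.
Qed.

Definition code_part (y : baire K) : baire K := fun b => fst (unpair (y b)).
Definition eval_part (y : baire K) : baire K := fun b => snd (unpair (y b)).

(* [y] pairs a point [c] of [diag] with the evaluation witnessing [diag c]. *)
Definition proper (y : baire K) : Prop :=
  (forall b, exists p q, y b = pair p q) /\
  is_eval (tree_of (code_part y)) (code_part y) (tree_of (eval_part y)) /\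
  (forall p, ~ (exists l, code_list l = p) -> eval_part y p = star) /\
  eval_part y (code_list []) = star /\
  wf_tree (tree_of (code_part y)).

Definition agree (a : K) (y y' : baire K) : Prop := forall b, lt b a -> y b = y' b.

Definition kclosed (P : baire K -> Prop) : Prop :=
  forall y, ~ P y -> exists a, forall y', agree a y y' -> ~ P y'.

Lemma kclosed_of_finite_support P :
  (forall y, ~ P y -> exists a S,
     forall y', agree a y y' -> (forall p, In p S -> y p = y' p) -> ~ P y') ->
  kclosed P.
Proof.
  intros hP y ny. destruct (hP y ny) as [a [S hS]].
  destruct (list_bounded (a :: S)) as [b hb]. exists b. intros y' hy. apply hS.
  - intros c hc. apply hy. exact (trans_lt _ _ _ hc (hb a (or_introl eq_refl))).
  - intros p hp. apply hy, hb. right. exact hp.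
Qed.

Lemma kclosed_coord b (R : K -> Prop) : kclosed (fun y => R (y b)).
Proof.
  apply kclosed_of_finite_support. intros y ny. exists least, [b].
  intros y' _ hy. rewrite <- (hy b); simpl; auto.
Qed.

Lemma kclosed_and P Q : kclosed P -> kclosed Q -> kclosed (fun y => P y /\ Q y).
Proof.
  intros hP hQ y ny. destruct (classic (P y)) as [py|npy].
  - destruct (hQ y (fun qy => ny (conj py qy))) as [a ha].
    exists a. intros y' hy [_ qy']. exact (ha y' hy qy').
  - destruct (hP y npy) as [a ha].
    exists a. intros y' hy [py' _]. exact (ha y' hy py').
Qed.

Lemma kclosed_forall {I : Type} (F : I -> baire K -> Prop) :
  (forall i, kclosed (F i)) -> kclosed (fun y => forall i, F i y).
Proof.
  intros hF y ny. destruct (not_all_ex_not _ _ ny) as [i ni].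
  destruct (hF i y ni) as [a ha]. exists a. intros y' hy all. exact (ha y' hy (all i)).
Qed.

Lemma basic_mem_local v : exists a, forall x x', agree a x x' -> (basic_mem v x <-> basic_mem v x').
Proof.
  destruct (classic (exists a (s : seg lt a -> K), enc (existT _ a s) = v)) as [[a [s <-]]|none].
  - exists a. intros x x' hx.
    assert (same : forall a' s', enc (existT _ a' s') = enc (existT _ a s) -> (N s' x <-> N s' x')).
    { intros a' s' e. pose proof (enc_dom_inj _ _ _ _ e). subst a'. apply enc_fun_inj in e. subst s'.
      split; intros h b hb; [rewrite <- (hx b hb)|rewrite (hx b hb)]; apply h. }
    split; intros [a' [s' [e [a2 hs']]]]; exists a', s'; repeat split; auto; apply (same a' s' e); auto.
  - exists least. intros x x' _. split; intros [a [s [e _]]]; exfalso; eauto.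
Qed.

Lemma union_rule_local E u : ~ union_rule E u ->
  exists S, forall E', E' u = E u -> (forall l, In l S -> E' l = E l) -> ~ union_rule E' u.
Proof.
  intro nr. destruct (classic (E u = star)) as [hs|hs].
  - destruct (not_all_ex_not _ _ (fun all => nr (or_introl (conj hs all)))) as [i hi].
    exists [u ++ [i]]. intros E' eu eS [[_ h]|[j [hj _]]].
    + apply hi. rewrite <- (eS (u ++ [i])); simpl; auto.
    + apply (lift_ne_star j). congruence.
  - destruct (classic (exists i, E u = lift i)) as [[i hi]|nl].
    + destruct (classic (E (u ++ [i]) = star)) as [his|his].
      * exists [u ++ [i]]. intros E' eu eS [[h _]|[j [hj [hj' _]]]]; [congruence|].
        assert (j = i) as -> by (apply lift_inj; congruence).
        apply hj'. rewrite (eS (u ++ [i])); simpl; auto.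
      * assert (exists j, lt j i /\ E (u ++ [j]) <> star) as [j [ji hj]].
        { apply NNPP; intro none. apply nr. right. exists i. repeat split; auto.
          intros j ji. apply NNPP; intro h. apply none. eauto. }
        exists [u ++ [j]]. intros E' eu eS [[h _]|[k [hk [_ below]]]]; [congruence|].
        assert (k = i) as -> by (apply lift_inj; congruence).
        apply hj. rewrite <- (eS (u ++ [j])); simpl; auto.
    + exists []. intros E' eu _ [[h _]|[j [hj _]]]; [congruence|]. apply nl. exists j. congruence.
Qed.

Lemma eval_rule_local T x E u : ~ eval_rule T x E u ->
  exists a S, forall T' x' E', T' u = T u -> E' u = E u -> (forall l, In l S -> E' l = E l) ->
    agree a x x' -> ~ eval_rule T' x' E' u.
Proof.
  intro nr. destruct (basic_mem_local (T u)) as [a ha].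
  destruct (classic (T u = tag_union)) as [hU|hU].
  - destruct (union_rule_local E u) as [S hS].
    { intro r. apply nr. right; left. auto. }
    exists a, S. intros T' x' E' eT eu eS _ [[hC _]|[[_ r]|[_ [hU' _]]]].
    + apply tag_compl_ne_union. congruence.
    + exact (hS E' eu eS r).
    + congruence.
  - exists a, [u ++ [ord 0]]. intros T' x' E' eT eu eS ex r'. apply nr.
    assert (e0 : E' (u ++ [ord 0]) = E (u ++ [ord 0])) by (apply eS; simpl; auto).
    unfold eval_rule, compl_rule, leaf_rule in *. rewrite eT, eu, e0 in r'.
    rewrite <- (ha x x' ex) in r'. tauto.
Qed.

Lemma eval_rule_kclosed u :
  kclosed (fun y => eval_rule (tree_of (code_part y)) (code_part y) (tree_of (eval_part y)) u).
Proof.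
  apply kclosed_of_finite_support. intros y ny.
  destruct (eval_rule_local _ _ _ u ny) as [a [S hS]].
  exists a, (code_list u :: map code_list S). intros y' hy hS'. apply hS.
  - unfold tree_of, code_part. rewrite (hS' (code_list u)); simpl; auto.
  - unfold tree_of, eval_part. rewrite (hS' (code_list u)); simpl; auto.
  - intros l hl. unfold tree_of, eval_part. rewrite (hS' (code_list l)); [reflexivity|].
    right. apply in_map, hl.
  - intros b hb. unfold code_part. rewrite (hy b hb). reflexivity.
Qed.

(* An infinite branch lives on countably many coordinates, which are bounded by [nat_seq_bounded]. *)
Lemma wf_tree_kclosed : kclosed (fun y => wf_tree (tree_of (code_part y))).
Proof.
  intros y ny. apply NNPP in ny. destruct ny as [g hg].
  destruct (nat_seq_bounded (fun n => code_list (g n))) as [a ha].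
  exists a. intros y' hy wf'. apply wf'. exists g. intro n.
  destruct (hg n) as [i [hi hT]]. exists i. split; [exact hi|].
  unfold tree_of, code_part in *. rewrite <- (hy _ (ha n)). exact hT.
Qed.

Lemma proper_kclosed : kclosed proper.
Proof.
  unfold proper, is_eval. repeat apply kclosed_and.
  - apply kclosed_forall. intro b. apply (kclosed_coord b (fun v => exists p q, v = pair p q)).
  - apply kclosed_forall, eval_rule_kclosed.
  - apply kclosed_forall. intro p.
    apply (kclosed_coord p (fun v => ~ (exists l, code_list l = p) -> snd (unpair v) = star)).
  - apply (kclosed_coord (code_list []) (fun v => snd (unpair v) = star)).
  - apply wf_tree_kclosed.
Qed.

Definition fails_at (a : K) (y : baire K) : Prop := forall y', agree a y y' -> ~ proper y'.

Lemma fails_at_agree a y y' : agree a y y' -> fails_at a y -> fails_at a y'.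
Proof. intros hy hf y'' hy'. apply hf. intros b hb. rewrite hy; auto. Qed.

Lemma fails_at_not_proper a y : fails_at a y -> ~ proper y.
Proof. intro hf. apply hf. intros b _. reflexivity. Qed.

(* While [y] may still be proper, [emb y] lifts its code part; at the least level where [y] is
   seen to be improper it writes [star], and above that level it encodes initial segments of [y]. *)
Definition emb (y : baire K) : baire K := fun b =>
  if emi (exists g, lek g b /\ fails_at g y) then
    (if emi (exists g, lt g b /\ fails_at g y) then enc (existT _ b (restr y b)) else star)
  else lift (code_part y b).

Definition causal (f : baire K -> baire K) : Prop :=
  forall y y' b, (forall g, lek g b -> y g = y' g) -> f y b = f y' b.

Lemma causal_kcontinuous f : causal f -> kcontinuous lt f.
Proof.
  intros hf U hU x hx. destruct (hU (f x) hx) as [a [s [hs sU]]].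
  exists a, (restr x a). split; [intros b hb; reflexivity|].
  intros y hy. apply sU. intros b hb. rewrite <- (hs b hb). apply hf.
  intros g hg. exact (hy g (lek_lt_trans _ _ _ hg hb)).
Qed.

Lemma emb_causal : causal emb.
Proof.
  intros y y' b hyy. unfold emb.
  assert (same_fail : forall g, lek g b -> (fails_at g y <-> fails_at g y')).
  { intros g hg. assert (agree_g : agree g y y').
    { intros c hc. apply hyy. left. exact (lt_lek_trans _ _ _ hc hg). }
    split; apply fails_at_agree; [exact agree_g|]. intros c hc. symmetry. exact (agree_g c hc). }
  assert (fail_le : (exists g, lek g b /\ fails_at g y) <-> (exists g, lek g b /\ fails_at g y')).
  { split; intros [g [hg hf]]; exists g; split; auto; apply (same_fail g hg), hf. }
  assert (fail_lt : (exists g, lt g b /\ fails_at g y) <-> (exists g, lt g b /\ fails_at g y')).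
  { split; intros [g [hg hf]]; exists g; split; auto; apply (same_fail g (or_introl hg)), hf. }
  assert (same_restr : restr y b = restr y' b).
  { extensionality t. apply hyy. left. exact (proj2_sig t). }
  assert (same_code : code_part y b = code_part y' b).
  { unfold code_part. rewrite hyy; [reflexivity|right; reflexivity]. }
  destruct (emi (exists g, lek g b /\ fails_at g y)) as [l1|l1];
  destruct (emi (exists g, lek g b /\ fails_at g y')) as [l2|l2]; try tauto.
  - destruct (emi (exists g, lt g b /\ fails_at g y)) as [s1|s1];
    destruct (emi (exists g, lt g b /\ fails_at g y')) as [s2|s2]; try tauto.
    rewrite same_restr. reflexivity.
  - rewrite same_code. reflexivity.
Qed.

Lemma emb_proper y : proper y -> emb y = fun b => lift (code_part y b).
Proof.
  intro py. extensionality b. unfold emb.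
  destruct (emi _) as [[g [_ hf]]|_]; [|reflexivity].
  exfalso. exact (fails_at_not_proper g y hf py).
Qed.

Lemma emb_improper_star y : ~ proper y -> exists a, emb y a = star.
Proof.
  intro np. destruct (wf_least _ _ _ wf_lt (proper_kclosed y np)) as [a [ha least_a]].
  exists a. unfold emb.
  destruct (emi _) as [_|no]; [|exfalso; apply no; exists a; split; [right|]; auto].
  destruct (emi _) as [[g [hg hf]]|_]; [|reflexivity].
  exfalso. exact (least_a g hf hg).
Qed.

Lemma emb_above_fail y a b : fails_at a y -> lt a b -> emb y b = enc (existT _ b (restr y b)).
Proof.
  intros hf ab. unfold emb.
  destruct (emi _) as [_|no]; [|exfalso; apply no; exists a; split; [left|]; auto].
  destruct (emi _) as [_|no]; [reflexivity|exfalso; apply no; eauto].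
Qed.

Lemma proper_eq y y' : proper y -> proper y' -> code_part y = code_part y' -> y = y'.
Proof.
  intros [pairs [ev [off [_ wfT]]]] [pairs' [ev' [off' _]]] same_code.
  rewrite <- same_code in ev'.
  pose proof (eval_unique _ _ _ _ wfT ev ev') as same_eval.
  extensionality b.
  assert (same_eval_b : eval_part y b = eval_part y' b).
  { destruct (classic (exists l, code_list l = b)) as [[l <-]|nl].
    - exact (f_equal (fun E => E l) same_eval).
    - rewrite off, off'; auto. }
  destruct (pairs b) as [p [q hb]], (pairs' b) as [p' [q' hb']].
  pose proof (f_equal (fun c => c b) same_code) as same_code_b.
  unfold code_part, eval_part in *. rewrite hb, hb', !unpair_pair in *. simpl in *. congruence.
Qed.

Lemma emb_inj y y' : emb y = emb y' -> y = y'.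
Proof.
  intro e.
  destruct (classic (proper y)) as [py|npy], (classic (proper y')) as [py'|npy'].
  - apply proper_eq; auto. extensionality b. apply lift_inj.
    rewrite (emb_proper y py), (emb_proper y' py') in e. exact (f_equal (fun f => f b) e).
  - exfalso. destruct (emb_improper_star y' npy') as [a ha].
    rewrite <- e, emb_proper in ha; [exact (lift_ne_star _ ha)|exact py].
  - exfalso. destruct (emb_improper_star y npy) as [a ha].
    rewrite e, emb_proper in ha; [exact (lift_ne_star _ ha)|exact py'].
  - destruct (proper_kclosed y npy) as [a ha], (proper_kclosed y' npy') as [a' ha'].
    extensionality g. destruct (list_bounded [a; a'; g]) as [b hb].
    pose proof (f_equal (fun f => f b) e) as eb. simpl in eb.
    rewrite (emb_above_fail y a b), (emb_above_fail y' a' b) in eb; auto; try (apply hb; simpl; auto).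
    apply enc_fun_inj in eb.
    exact (f_equal (fun s => s (exist _ g (hb g ltac:(simpl; auto)))) eb).
Qed.

Lemma emb_range c : (exists y, emb y = fun b => lift (c b)) <-> diag c.
Proof.
  split.
  - intros [y hy].
    assert (py : proper y).
    { apply NNPP; intro np. destruct (emb_improper_star y np) as [a ha].
      rewrite hy in ha. exact (lift_ne_star _ ha). }
    assert (code : code_part y = c).
    { extensionality b. apply lift_inj. rewrite emb_proper in hy by exact py.
      exact (f_equal (fun f => f b) hy). }
    destruct py as [_ [ev [_ [root wfT]]]]. rewrite code in ev, wfT.
    split; [exact wfT|]. exists (tree_of (eval_part y)). auto.
  - intros [wfT [E [ev root]]].
    pose (y := fun b => pair (c b) (baire_of E star b)).
    assert (code : code_part y = c).
    { extensionality b. unfold code_part, y. rewrite unpair_pair. reflexivity. }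
    assert (eval : eval_part y = baire_of E star).
    { extensionality b. unfold eval_part, y. rewrite unpair_pair. reflexivity. }
    assert (py : proper y).
    { unfold proper. rewrite code, eval, tree_of_baire_of.
      split; [intro b; unfold y; eauto|]. split; [exact ev|].
      split; [intros p hp; apply baire_of_off, hp|].
      split; [rewrite baire_of_code_list; exact root|exact wfT]. }
    exists y. rewrite emb_proper by exact py. rewrite code. reflexivity.
Qed.

Lemma kBorel_preimage B f : kcontinuous lt f -> kBorel lt B -> kBorel lt (fun x => B (f x)).
Proof.
  intros hf. induction 1 as [U hU|A _ IH|F _ IH].
  - apply kBorel_open, hf, hU.
  - exact (kBorel_compl IH).
  - exact (kBorel_union (fun i x => F i (f x)) IH).
Qed.

Lemma lift_causal : causal (fun c b => lift (c b)).
Proof. intros c c' b h. rewrite h; [reflexivity|right; reflexivity]. Qed.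

Theorem kcontinuous_injection_with_non_kBorel_range : exists f : baire K -> baire K,
  kcontinuous lt f /\ (forall x y, f x = f y -> x = y) /\ ~ kBorel lt (fun y => exists x, f x = y).
Proof.
  exists emb. split; [exact (causal_kcontinuous _ emb_causal)|]. split; [exact emb_inj|].
  intro range_borel. apply (diag_not_kBorel (fun c => exists y, emb y = fun b => lift (c b))).
  - exact emb_range.
  - exact (kBorel_preimage _ _ (causal_kcontinuous _ lift_causal) range_borel).
Qed.

End GeneralizedBaireSpace.

Theorem corollary1p9 (K : Type) (lt : K -> K -> Prop) :
  is_cardinal lt -> uncountable K -> kappa_lt_kappa_eq_kappa lt ->
  exists f : baire K -> baire K,
    kcontinuous lt f /\
    (forall x y, f x = f y -> x = y) /\
    ~ kBorel lt (fun y => exists x, f x = y).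
Proof.
  intros [[irr [trans [total wf]]] card] unc [enc enc_inj].
  exact (kcontinuous_injection_with_non_kBorel_range K lt irr trans total wf
           (uncountable_inhabited K unc) unc card enc enc_inj).
Qed.
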